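(* Let $\sigma\in\{1,-1\}$, let $U$ be an open subset of the Weyl upper half-plane, and let $\varphi:U\to\mathbb{C}$ be a $C^\infty$ function of the form $$\varphi(\rho,v)=\frac{-\sigma(\omega-v)\pm\sqrt{(\omega-v)^2+\sigma\rho^2}}{\rho}$$ for a fixed $\omega\in\mathbb{C}$ and a fixed continuous branch of the square root on $U$, with $\varphi\neq0$ and $\varphi^2+\sigma\neq0$ on $U$. Let $M$ be an invertible $n\times n$ matrix function on $U$ of class $C^2$ and let $A=M^{-1}dM$. Suppose there is an invertible $n\times n$ matrix function $X$ on $U$ of class $C^2$, with $X^{-1}$ of class $C^1$, satisfying the Breitenlohner–Maison linear system $$\varphi\,(dX+AX)=\star\, dX\quad\text{on }U.$$ Then $A$ satisfies the field equations $$d(\rho\,\star A)=0\quad\text{on }U.$$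
   Context: The Weyl upper half-plane is $\{(\rho,v)\in\mathbb{R}^2:\rho>0\}$. The Hodge star $\star$ acts on one-forms in $(\rho,v)$ (entrywise on matrix-valued one-forms, linearly over functions) by $\star d\rho=-\sigma\,dv$, $\star dv=d\rho$; $d$ is the exterior derivative in $(\rho,v)$. *)

From Stdlib Require Import Reals.
Open Scope R_scope.

Definition Cx : Type := (R * R)%type.
Definition Cre (z : Cx) : R := fst z.
Definition Cim (z : Cx) : R := snd z.
Definition RtoC (x : R) : Cx := (x, 0).
Definition C0 : Cx := (0, 0).
Definition Cadd (z w : Cx) : Cx := (fst z + fst w, snd z + snd w).
Definition Copp (z : Cx) : Cx := (- fst z, - snd z).
Definition Csub (z w : Cx) : Cx := Cadd z (Copp w).
Definition Cmul (z w : Cx) : Cx :=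
  (fst z * fst w - snd z * snd w, fst z * snd w + snd z * fst w).
Definition Csq (z : Cx) : Cx := Cmul z z.
Definition Cscal (a : R) (z : Cx) : Cx := (a * fst z, a * snd z).

(* ---------- n x n complex matrices (entries outside 0..n-1 are ignored) ---------- *)
Definition Mat : Type := nat -> nat -> Cx.
Fixpoint Csum (k : nat) (f : nat -> Cx) : Cx :=
  match k with O => C0 | S k' => Cadd (Csum k' f) (f k') end.
Definition mat_mul (n : nat) (A B : Mat) : Mat :=
  fun i j => Csum n (fun k => Cmul (A i k) (B k j)).
Definition mat_add (A B : Mat) : Mat := fun i j => Cadd (A i j) (B i j).
Definition mat_sub (A B : Mat) : Mat := fun i j => Csub (A i j) (B i j).
Definition mat_cscale (c : Cx) (A : Mat) : Mat := fun i j => Cmul c (A i j).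
Definition mat_rscale (a : R) (A : Mat) : Mat := fun i j => Cscal a (A i j).
Definition mat_id : Mat := fun i j => if Nat.eqb i j then RtoC 1 else C0.
Definition mat_zero : Mat := fun _ _ => C0.
Definition mat_eq (n : nat) (A B : Mat) : Prop :=
  forall i j, (i < n)%nat -> (j < n)%nat -> A i j = B i j.
Definition mat_inverse (n : nat) (A B : Mat) : Prop :=
  mat_eq n (mat_mul n A B) mat_id /\ mat_eq n (mat_mul n B A) mat_id.

Definition region : Type := R -> R -> Prop.

Definition open_region (U : region) : Prop :=
  forall r v, U r v -> exists d, 0 < d /\
    forall r' v', Rabs (r' - r) < d -> Rabs (v' - v) < d -> U r' v'.

Definition in_weyl_half_plane (U : region) : Prop := forall r v, U r v -> 0 < r.

Definition cont_on (U : region) (f : R -> R -> R) : Prop :=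
  forall r v, U r v -> forall eps, 0 < eps -> exists d, 0 < d /\
    forall r' v', U r' v' -> Rabs (r' - r) < d -> Rabs (v' - v) < d ->
      Rabs (f r' v' - f r v) < eps.

Definition pd_rho (U : region) (f g : R -> R -> R) : Prop :=
  forall r v, U r v -> derivable_pt_lim (fun x => f x v) r (g r v).
Definition pd_v (U : region) (f g : R -> R -> R) : Prop :=
  forall r v, U r v -> derivable_pt_lim (fun y => f r y) v (g r v).

Fixpoint CkR (k : nat) (U : region) (f : R -> R -> R) : Prop :=
  match k with
  | O => cont_on U f
  | S k' => cont_on U f /\ exists gr gv : R -> R -> R,
             pd_rho U f gr /\ pd_v U f gv /\ CkR k' U gr /\ CkR k' U gv
  end.

Definition CkC (k : nat) (U : region) (f : R -> R -> Cx) : Prop :=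
  CkR k U (fun r v => Cre (f r v)) /\ CkR k U (fun r v => Cim (f r v)).
Definition SmoothC (U : region) (f : R -> R -> Cx) : Prop := forall k, CkC k U f.
Definition pdC_rho (U : region) (f g : R -> R -> Cx) : Prop :=
  pd_rho U (fun r v => Cre (f r v)) (fun r v => Cre (g r v)) /\
  pd_rho U (fun r v => Cim (f r v)) (fun r v => Cim (g r v)).
Definition pdC_v (U : region) (f g : R -> R -> Cx) : Prop :=
  pd_v U (fun r v => Cre (f r v)) (fun r v => Cre (g r v)) /\
  pd_v U (fun r v => Cim (f r v)) (fun r v => Cim (g r v)).

Definition CkM (n k : nat) (U : region) (F : R -> R -> Mat) : Prop :=
  forall i j, (i < n)%nat -> (j < n)%nat -> CkC k U (fun r v => F r v i j).
Definition pdM_rho (n : nat) (U : region) (F G : R -> R -> Mat) : Prop :=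
  forall i j, (i < n)%nat -> (j < n)%nat ->
    pdC_rho U (fun r v => F r v i j) (fun r v => G r v i j).
Definition pdM_v (n : nat) (U : region) (F G : R -> R -> Mat) : Prop :=
  forall i j, (i < n)%nat -> (j < n)%nat ->
    pdC_v U (fun r v => F r v i j) (fun r v => G r v i j).

(* Write [B = dX X^{-1}].  The linear system then expresses [A] through [B]: with
   [Psi = 1 / phi] one gets [A_rho = Psi B_v - B_rho] and
   [A_v = - sigma Psi B_rho - B_v].  Both [A = M^{-1} dM] and [B] have zero curvature, by the
   symmetry of the second derivatives of [M] and [X].  The explicit form of [phi] makes [Psi]
   a root of [rho Psi^2 - 2 (omega - v) Psi - sigma rho], and differentiating this relation
   gives [rho Psi_v = - sigma Psi (Psi + rho Psi_rho)] and [rho Psi_rho = Psi (1 + rho Psi_v)].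
   Multiplied by [Psi], the field equation [d_rho (- sigma rho A_rho) = d_v (rho A_v)] is a
   combination of the two zero-curvature equations (whose commutator terms cancel) and of
   these two equations for [Psi]. *)

From Stdlib Require Import Reals Lra Lia IndefiniteDescription Nsatz.
From Coquelicot Require Derive Derive_2d.
Open Scope R_scope.

(** * Complex numbers and matrices *)

Notation C1 := (RtoC 1).

Lemma Cx_eq (z w : Cx) : fst z = fst w -> snd z = snd w -> z = w.
Proof. destruct z, w; simpl; intros -> ->; reflexivity. Qed.

Lemma Cx_ring : ring_theory C0 C1 Cadd Cmul Csub Copp (@eq Cx).
Proof.
  constructor; intros; repeat match goal with z : Cx |- _ => destruct z end;
    apply Cx_eq; unfold Csub, Cadd, Cmul, Copp; simpl; ring.
Qed.
Add Ring Cx_ring : Cx_ring.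

Lemma Cscal_RtoC a z : Cscal a z = Cmul (RtoC a) z.
Proof. apply Cx_eq; simpl; ring. Qed.
Lemma RtoC_mul a b : RtoC (a * b) = Cmul (RtoC a) (RtoC b).
Proof. apply Cx_eq; simpl; ring. Qed.
Lemma RtoC_opp a : RtoC (- a) = Copp (RtoC a).
Proof. apply Cx_eq; simpl; ring. Qed.
Lemma RtoC_neq0 r : r <> 0 -> RtoC r <> C0.
Proof. intros Hr E. injection E. exact Hr. Qed.

Lemma Csub_eq0 a b : Csub a b = C0 -> a = b.
Proof. intros E. transitivity (Cadd (Csub a b) b); [ring | rewrite E; ring]. Qed.

Lemma Cmul_eq0 (z w : Cx) : Cmul z w = C0 -> z = C0 \/ w = C0.
Proof.
  destruct z as [a b], w as [c d]; unfold Cmul, C0; simpl; intros E.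
  injection E as E1 E2.
  assert (Hc : (a * a + b * b) * c = 0).
  { replace ((a * a + b * b) * c) with (a * (a * c - b * d) + b * (a * d + b * c)) by ring.
    rewrite E1, E2; ring. }
  assert (Hd : (a * a + b * b) * d = 0).
  { replace ((a * a + b * b) * d) with (a * (a * d + b * c) - b * (a * c - b * d)) by ring.
    rewrite E1, E2; ring. }
  destruct (Req_dec (a * a + b * b) 0) as [Hn | Hn].
  - left. assert (a = 0) by nra. assert (b = 0) by nra. subst; reflexivity.
  - right. apply Rmult_integral in Hc, Hd.
    destruct Hc, Hd; try contradiction; subst; reflexivity.
Qed.
Lemma Cmul_reg_l (z w : Cx) : z <> C0 -> Cmul z w = C0 -> w = C0.
Proof. intros Hz E. destruct (Cmul_eq0 z w E); [contradiction | assumption]. Qed.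

Lemma Cmul_eq1_neq0 z w : Cmul z w = C1 -> z <> C0.
Proof. intros H ->. replace (Cmul C0 w) with C0 in H by ring. injection H. lra. Qed.

#[local] Instance Cx_ops : @Ring_ops Cx C0 C1 Cadd Cmul Csub Copp (@eq Cx) := {}.
#[local] Instance Cx_Ring : Ring (Ro := Cx_ops).
Proof.
  constructor; try exact eq_equivalence;
    try (intros ? ? -> ? ? ->; reflexivity); try (intros ? ? ->; reflexivity);
    intros; repeat match goal with z : Cx |- _ => destruct z end;
    apply Cx_eq; unfold Csub, Cadd, Cmul, Copp; simpl; ring.
Defined.
#[local] Instance Cx_Cring : Cring (Rr := Cx_Ring).
Proof. intros [a b] [c d]. apply Cx_eq; simpl; ring. Defined.
#[local] Instance Cx_domain : Integral_domain (Rcr := Cx_Cring).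
Proof.
  constructor.
  - exact Cmul_eq0.
  - intro E. injection E. lra.
Defined.


Lemma Csum_ext m f g : (forall k, (k < m)%nat -> f k = g k) -> Csum m f = Csum m g.
Proof.
  induction m as [|m IH]; simpl; intros H; [reflexivity|].
  rewrite IH by (intros; apply H; lia). rewrite H by lia. reflexivity.
Qed.
Lemma Csum_add m f g : Csum m (fun k => Cadd (f k) (g k)) = Cadd (Csum m f) (Csum m g).
Proof. induction m as [|m IH]; simpl; [apply Cx_eq; simpl; ring | rewrite IH; ring]. Qed.
Lemma Csum_opp m f : Csum m (fun k => Copp (f k)) = Copp (Csum m f).
Proof. induction m as [|m IH]; simpl; [apply Cx_eq; simpl; ring | rewrite IH; ring]. Qed.
Lemma Csum_mul_l m c f : Csum m (fun k => Cmul c (f k)) = Cmul c (Csum m f).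
Proof. induction m as [|m IH]; simpl; [apply Cx_eq; simpl; ring | rewrite IH; ring]. Qed.
Lemma Csum_mul_r m c f : Csum m (fun k => Cmul (f k) c) = Cmul (Csum m f) c.
Proof. induction m as [|m IH]; simpl; [apply Cx_eq; simpl; ring | rewrite IH; ring]. Qed.
Lemma Csum_swap m p (F : nat -> nat -> Cx) :
  Csum m (fun k => Csum p (F k)) = Csum p (fun l => Csum m (fun k => F k l)).
Proof.
  induction m as [|m IH]; simpl.
  - induction p as [|p IHp]; simpl; [reflexivity|]. rewrite <- IHp. apply Cx_eq; simpl; ring.
  - rewrite IH, <- Csum_add. reflexivity.
Qed.
Lemma Csum_C0 m : Csum m (fun _ => C0) = C0.
Proof. induction m as [|m IH]; simpl; [|rewrite IH]; apply Cx_eq; simpl; ring. Qed.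
Lemma Csum_delta m f j : (j < m)%nat ->
  Csum m (fun k => Cmul (f k) (if Nat.eqb k j then C1 else C0)) = f j.
Proof.
  induction m as [|m IH]; intros Hj; simpl; [lia|].
  destruct (Nat.eqb_spec m j) as [->|Hmj].
  - rewrite (Csum_ext _ _ (fun _ => C0)).
    + rewrite Csum_C0. ring.
    + intros k Hk. destruct (Nat.eqb_spec k j); [lia | ring].
  - rewrite IH by lia. ring.
Qed.

Section Matrices.
Variable n : nat.

Lemma mat_mulA A B C i j :
  mat_mul n (mat_mul n A B) C i j = mat_mul n A (mat_mul n B C) i j.
Proof.
  unfold mat_mul.
  transitivity (Csum n (fun k => Csum n (fun l => Cmul (A i l) (Cmul (B l k) (C k j))))).
  - apply Csum_ext; intros k _. rewrite <- Csum_mul_r. apply Csum_ext; intros; ring.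
  - rewrite Csum_swap. apply Csum_ext; intros l _. rewrite <- Csum_mul_l. reflexivity.
Qed.
Lemma mat_mulDl A B C i j :
  mat_mul n (mat_add A B) C i j = Cadd (mat_mul n A C i j) (mat_mul n B C i j).
Proof. unfold mat_mul, mat_add. rewrite <- Csum_add. apply Csum_ext; intros; ring. Qed.
Lemma mat_mulDr A B C i j :
  mat_mul n A (mat_add B C) i j = Cadd (mat_mul n A B i j) (mat_mul n A C i j).
Proof. unfold mat_mul, mat_add. rewrite <- Csum_add. apply Csum_ext; intros; ring. Qed.
Lemma mat_mulBr A B C i j :
  mat_mul n A (mat_sub B C) i j = Csub (mat_mul n A B i j) (mat_mul n A C i j).
Proof.
  unfold mat_mul, mat_sub, Csub. rewrite <- Csum_opp, <- Csum_add.
  apply Csum_ext; intros; ring.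
Qed.
Lemma mat_mulBl A B C i j :
  mat_mul n (mat_sub A B) C i j = Csub (mat_mul n A C i j) (mat_mul n B C i j).
Proof.
  unfold mat_mul, mat_sub, Csub. rewrite <- Csum_opp, <- Csum_add.
  apply Csum_ext; intros; ring.
Qed.
Lemma mat_mulZl c A B i j : mat_mul n (mat_cscale c A) B i j = Cmul c (mat_mul n A B i j).
Proof. unfold mat_mul, mat_cscale. rewrite <- Csum_mul_l. apply Csum_ext; intros; ring. Qed.
Lemma mat_mulZr c A B i j : mat_mul n A (mat_cscale c B) i j = Cmul c (mat_mul n A B i j).
Proof. unfold mat_mul, mat_cscale. rewrite <- Csum_mul_l. apply Csum_ext; intros; ring. Qed.
Lemma mat_mul1r A i j : (j < n)%nat -> mat_mul n A mat_id i j = A i j.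
Proof. intros Hj. exact (Csum_delta n (A i) j Hj). Qed.
Lemma mat_mul1l A i j : (i < n)%nat -> mat_mul n mat_id A i j = A i j.
Proof.
  intros Hi. rewrite <- (Csum_delta n (fun k => A k j) i Hi). apply Csum_ext; intros k _.
  unfold mat_id. destruct (Nat.eqb_spec i k), (Nat.eqb_spec k i); try lia; ring.
Qed.
Lemma mat_mul_eq_l A A' B i j : mat_eq n A A' -> (i < n)%nat ->
  mat_mul n A B i j = mat_mul n A' B i j.
Proof. intros E Hi. apply Csum_ext; intros k Hk. rewrite E; auto. Qed.
Lemma mat_mul_eq_r A B B' i j : mat_eq n B B' -> (j < n)%nat ->
  mat_mul n A B i j = mat_mul n A B' i j.
Proof. intros E Hj. apply Csum_ext; intros k Hk. rewrite E; auto. Qed.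

Lemma mat_inverse_sym G Gi : mat_inverse n G Gi -> mat_inverse n Gi G.
Proof. intros [H1 H2]; split; assumption. Qed.

Lemma mat_mulKV G Gi A : mat_inverse n G Gi -> mat_eq n (mat_mul n (mat_mul n A G) Gi) A.
Proof.
  intros [HG _] i j Hi Hj. rewrite mat_mulA, (mat_mul_eq_r _ _ _ _ _ HG Hj).
  apply mat_mul1r; exact Hj.
Qed.
Lemma mat_mulVK G Gi A : mat_inverse n G Gi -> mat_eq n (mat_mul n G (mat_mul n Gi A)) A.
Proof.
  intros [HG _] i j Hi Hj. rewrite <- mat_mulA, (mat_mul_eq_l _ _ _ _ _ HG Hi).
  apply mat_mul1l; exact Hi.
Qed.
Lemma mat_mul_cancel_r G Gi A B : mat_inverse n G Gi ->
  mat_eq n (mat_mul n A G) (mat_mul n B G) -> mat_eq n A B.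
Proof.
  intros HG E i j Hi Hj.
  rewrite <- (mat_mulKV G Gi A HG i j Hi Hj), <- (mat_mulKV G Gi B HG i j Hi Hj).
  apply mat_mul_eq_l; assumption.
Qed.
Lemma mat_mul_cancel_l G Gi A B : mat_inverse n G Gi ->
  mat_eq n (mat_mul n G A) (mat_mul n G B) -> mat_eq n A B.
Proof.
  intros HG E i j Hi Hj. apply mat_inverse_sym in HG.
  rewrite <- (mat_mulVK Gi G A HG i j Hi Hj), <- (mat_mulVK Gi G B HG i j Hi Hj).
  apply mat_mul_eq_r; assumption.
Qed.

Lemma mat_commutator_lincomb a b c d P Q i j :
  mat_sub
    (mat_mul n (mat_add (mat_cscale a P) (mat_cscale b Q)) (mat_add (mat_cscale c P) (mat_cscale d Q)))
    (mat_mul n (mat_add (mat_cscale c P) (mat_cscale d Q)) (mat_add (mat_cscale a P) (mat_cscale b Q)))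
    i j
  = Cmul (Csub (Cmul a d) (Cmul b c)) (mat_sub (mat_mul n P Q) (mat_mul n Q P) i j).
Proof. unfold mat_sub. rewrite !mat_mulDl, !mat_mulDr, !mat_mulZl, !mat_mulZr. ring. Qed.

Lemma mat_solve_linear f g Y AX Z : Cmul g f = C1 ->
  mat_eq n (mat_cscale f (mat_add Y AX)) Z -> mat_eq n AX (mat_sub (mat_cscale g Z) Y).
Proof.
  intros Hgf E i j Hi Hj. specialize (E i j Hi Hj). unfold mat_cscale, mat_add, mat_sub in *.
  revert Hgf E. clear. intros. nsatz.
Qed.

Lemma mat_commutator_eq A A' B B' i j : mat_eq n A A' -> mat_eq n B B' ->
  (i < n)%nat -> (j < n)%nat ->
  mat_sub (mat_mul n A B) (mat_mul n B A) i j = mat_sub (mat_mul n A' B') (mat_mul n B' A') i j.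
Proof.
  intros EA EB Hi Hj. unfold mat_sub.
  rewrite (mat_mul_eq_l A A' B i j EA Hi), (mat_mul_eq_r A' B B' i j EB Hj),
    (mat_mul_eq_l B B' A i j EB Hi), (mat_mul_eq_r B' A A' i j EA Hj).
  reflexivity.
Qed.

End Matrices.

(** * Partial derivatives along coordinate lines *)

Lemma derivable_pt_lim_loc f g x l e : 0 < e -> (forall t, Rabs (t - x) < e -> f t = g t) ->
  derivable_pt_lim g x l -> derivable_pt_lim f x l.
Proof.
  intros He E H eps Heps. destruct (H eps Heps) as [e' He'].
  assert (Hm : 0 < Rmin e e') by (apply Rmin_pos; [exact He | apply cond_pos]).
  exists (mkposreal _ Hm). intros h Hh0 Hh. simpl in Hh.
  pose proof (Rmin_l e e'). pose proof (Rmin_r e e').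
  rewrite !E; [apply He'; [exact Hh0 | lra] | rewrite Rminus_diag, Rabs_R0; lra |].
  replace (x + h - x) with h by ring. lra.
Qed.

Inductive direction := Drho | Dv.

Definition slice {T : Type} (d : direction) (F : R -> R -> T) (r v : R) : R -> T :=
  fun t => match d with Drho => F t v | Dv => F r t end.
Definition coord (d : direction) (r v : R) : R := match d with Drho => r | Dv => v end.

(* Chosen so that [pdR Drho], [pdC Drho], [pdM Drho] unfold to [pd_rho], [pdC_rho],
   [pdM_rho] (and likewise for [Dv]). *)
Definition pdR (d : direction) (U : region) (f g : R -> R -> R) : Prop :=
  forall r v, U r v -> derivable_pt_lim (slice d f r v) (coord d r v) (g r v).
Definition pdC (d : direction) (U : region) (f g : R -> R -> Cx) : Prop :=
  pdR d U (fun r v => Cre (f r v)) (fun r v => Cre (g r v)) /\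
  pdR d U (fun r v => Cim (f r v)) (fun r v => Cim (g r v)).
Definition pdM (d : direction) (n : nat) (U : region) (F G : R -> R -> Mat) : Prop :=
  forall i j, (i < n)%nat -> (j < n)%nat ->
    pdC d U (fun r v => F r v i j) (fun r v => G r v i j).

Lemma open_slice d U r v : open_region U -> U r v ->
  exists e, 0 < e /\ forall t, Rabs (t - coord d r v) < e -> slice d U r v t.
Proof.
  intros HU Hin. destruct (HU r v Hin) as [e [He Hball]]. exists e; split; [exact He|].
  assert (H0 : forall x, Rabs (x - x) < e) by (intros; rewrite Rminus_diag, Rabs_R0; exact He).
  intros t Ht; destruct d; apply Hball; auto.
Qed.

Section PartialDerivatives.
Variables (d : direction) (U : region).

Lemma pdR_val f g g' : (forall r v, U r v -> g r v = g' r v) -> pdR d U f g -> pdR d U f g'.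
Proof. intros E H r v Hin. rewrite <- E by exact Hin. exact (H r v Hin). Qed.

Lemma pdR_const c : pdR d U (fun _ _ => c) (fun _ _ => 0).
Proof. intros r v _. destruct d; apply derivable_pt_lim_const. Qed.
Lemma pdR_rho : pdR d U (fun r _ => r) (fun _ _ => match d with Drho => 1 | Dv => 0 end).
Proof. intros r v _. destruct d; [apply derivable_pt_lim_id | apply derivable_pt_lim_const]. Qed.
Lemma pdR_v : pdR d U (fun _ v => v) (fun _ _ => match d with Drho => 0 | Dv => 1 end).
Proof. intros r v _. destruct d; [apply derivable_pt_lim_const | apply derivable_pt_lim_id]. Qed.
Lemma pdR_add f f' g g' : pdR d U f f' -> pdR d U g g' ->
  pdR d U (fun r v => f r v + g r v) (fun r v => f' r v + g' r v).
Proof.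
  intros Hf Hg r v Hin.
  destruct d; exact (derivable_pt_lim_plus _ _ _ _ _ (Hf r v Hin) (Hg r v Hin)).
Qed.
Lemma pdR_opp f f' : pdR d U f f' -> pdR d U (fun r v => - f r v) (fun r v => - f' r v).
Proof. intros Hf r v Hin. destruct d; exact (derivable_pt_lim_opp _ _ _ (Hf r v Hin)). Qed.
Lemma pdR_mul f f' g g' : pdR d U f f' -> pdR d U g g' ->
  pdR d U (fun r v => f r v * g r v) (fun r v => f' r v * g r v + f r v * g' r v).
Proof.
  intros Hf Hg r v Hin.
  destruct d; exact (derivable_pt_lim_mult _ _ _ _ _ (Hf r v Hin) (Hg r v Hin)).
Qed.
Lemma pdR_inv_rho a : (forall r v, U r v -> r <> 0) ->
  pdR d U (fun r _ => a / r) (fun r _ => match d with Drho => - a / r ^ 2 | Dv => 0 end).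
Proof.
  intros Hr r v Hin. specialize (Hr r v Hin). destruct d; [|apply derivable_pt_lim_const].
  pose proof (derivable_pt_lim_div _ _ _ _ _ (derivable_pt_lim_const a r) (derivable_pt_lim_id r) Hr)
    as D.
  replace (- a / r ^ 2) with ((0 * id r - 1 * a) / (id r)²) by (unfold id, Rsqr; field; exact Hr).
  exact D.
Qed.

Lemma pdR_ext f g h : open_region U -> (forall r v, U r v -> f r v = g r v) ->
  pdR d U g h -> pdR d U f h.
Proof.
  intros HU E H r v Hin.
  destruct (open_slice d U r v HU Hin) as [e [He Hline]].
  apply (derivable_pt_lim_loc _ (slice d g r v) _ _ e He); [|exact (H r v Hin)].
  intros t Ht. specialize (Hline t Ht). destruct d; apply E; exact Hline.
Qed.

Lemma pdR_unique_on f f' g g' : open_region U -> (forall r v, U r v -> f r v = g r v) ->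
  pdR d U f f' -> pdR d U g g' -> forall r v, U r v -> f' r v = g' r v.
Proof.
  intros HU E Hf Hg r v Hin.
  exact (uniqueness_limite _ _ _ _ (Hf r v Hin) (pdR_ext f g g' HU E Hg r v Hin)).
Qed.

Lemma pdC_val f g g' : (forall r v, U r v -> g r v = g' r v) -> pdC d U f g -> pdC d U f g'.
Proof. intros E [H1 H2]; split; eapply pdR_val; eauto; intros r v Hin; simpl; rewrite E; auto. Qed.
Lemma pdC_ext f g h : open_region U -> (forall r v, U r v -> f r v = g r v) ->
  pdC d U g h -> pdC d U f h.
Proof. intros HU E [H1 H2]; split; eapply pdR_ext; eauto; intros r v Hin; simpl; rewrite E; auto. Qed.
Lemma pdC_unique_on f f' g g' : open_region U -> (forall r v, U r v -> f r v = g r v) ->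
  pdC d U f f' -> pdC d U g g' -> forall r v, U r v -> f' r v = g' r v.
Proof.
  intros HU E [Hf1 Hf2] [Hg1 Hg2] r v Hin.
  assert (Ere : forall r v, U r v -> Cre (f r v) = Cre (g r v)) by (intros; rewrite E; auto).
  assert (Eim : forall r v, U r v -> Cim (f r v) = Cim (g r v)) by (intros; rewrite E; auto).
  apply Cx_eq.
  - exact (pdR_unique_on _ _ _ _ HU Ere Hf1 Hg1 r v Hin).
  - exact (pdR_unique_on _ _ _ _ HU Eim Hf2 Hg2 r v Hin).
Qed.

Lemma pdC_const c : pdC d U (fun _ _ => c) (fun _ _ => C0).
Proof. split; apply pdR_const. Qed.
Lemma pdC_RtoC f f' : pdR d U f f' -> pdC d U (fun r v => RtoC (f r v)) (fun r v => RtoC (f' r v)).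
Proof. intros H; split; [exact H | exact (pdR_const 0)]. Qed.
Lemma pdC_add f f' g g' : pdC d U f f' -> pdC d U g g' ->
  pdC d U (fun r v => Cadd (f r v) (g r v)) (fun r v => Cadd (f' r v) (g' r v)).
Proof. intros [Hf1 Hf2] [Hg1 Hg2]; split; apply pdR_add; assumption. Qed.
Lemma pdC_opp f f' : pdC d U f f' -> pdC d U (fun r v => Copp (f r v)) (fun r v => Copp (f' r v)).
Proof. intros [Hf1 Hf2]; split; apply pdR_opp; assumption. Qed.
Lemma pdC_mul f f' g g' : pdC d U f f' -> pdC d U g g' ->
  pdC d U (fun r v => Cmul (f r v) (g r v))
          (fun r v => Cadd (Cmul (f' r v) (g r v)) (Cmul (f r v) (g' r v))).
Proof.
  intros [Hf1 Hf2] [Hg1 Hg2]; split.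
  - eapply pdR_val; [|apply pdR_add; [|apply pdR_opp]; apply pdR_mul; eassumption].
    intros; unfold Cre, Cim; simpl; ring.
  - eapply pdR_val; [|apply pdR_add; apply pdR_mul; eassumption].
    intros; unfold Cre, Cim; simpl; ring.
Qed.
Lemma pdC_scal f f' g g' : pdR d U f f' -> pdC d U g g' ->
  pdC d U (fun r v => Cscal (f r v) (g r v))
          (fun r v => Cadd (Cscal (f' r v) (g r v)) (Cscal (f r v) (g' r v))).
Proof. intros Hf [Hg1 Hg2]; split; apply pdR_mul; assumption. Qed.
Lemma pdC_sum m f f' : (forall k, (k < m)%nat -> pdC d U (f k) (f' k)) ->
  pdC d U (fun r v => Csum m (fun k => f k r v)) (fun r v => Csum m (fun k => f' k r v)).
Proof.
  induction m as [|m IH]; intros H; simpl.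
  - apply pdC_const.
  - apply pdC_add; [apply IH; intros; apply H; lia | apply H; lia].
Qed.

Lemma pdC_zero_on f f' : open_region U -> (forall r v, U r v -> f r v = C0) ->
  pdC d U f f' -> forall r v, U r v -> f' r v = C0.
Proof. intros HU E Hf. exact (pdC_unique_on _ _ _ _ HU E Hf (pdC_const C0)). Qed.

Variable n : nat.

Lemma pdM_ext F G H : open_region U -> (forall r v, U r v -> mat_eq n (F r v) (G r v)) ->
  pdM d n U G H -> pdM d n U F H.
Proof. intros HU E HG i j Hi Hj. eapply pdC_ext; eauto. intros; apply E; auto. Qed.
Lemma pdM_unique_on F F' G G' : open_region U -> (forall r v, U r v -> mat_eq n (F r v) (G r v)) ->
  pdM d n U F F' -> pdM d n U G G' -> forall r v, U r v -> mat_eq n (F' r v) (G' r v).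
Proof.
  intros HU E HF HG r v Hin i j Hi Hj.
  assert (Eij : forall r v, U r v -> F r v i j = G r v i j) by (intros; apply E; auto).
  exact (pdC_unique_on _ _ _ _ HU Eij (HF i j Hi Hj) (HG i j Hi Hj) r v Hin).
Qed.

Lemma pdM_add F F' G G' : pdM d n U F F' -> pdM d n U G G' ->
  pdM d n U (fun r v => mat_add (F r v) (G r v)) (fun r v => mat_add (F' r v) (G' r v)).
Proof. intros HF HG i j Hi Hj. apply pdC_add; auto. Qed.
Lemma pdM_cscale f f' F F' : pdC d U f f' -> pdM d n U F F' ->
  pdM d n U (fun r v => mat_cscale (f r v) (F r v))
    (fun r v => mat_add (mat_cscale (f' r v) (F r v)) (mat_cscale (f r v) (F' r v))).
Proof. intros Hf HF i j Hi Hj. apply pdC_mul; auto. Qed.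
Lemma pdM_rscale f f' F F' : pdR d U f f' -> pdM d n U F F' ->
  pdM d n U (fun r v => mat_rscale (f r v) (F r v))
    (fun r v => mat_add (mat_rscale (f' r v) (F r v)) (mat_rscale (f r v) (F' r v))).
Proof. intros Hf HF i j Hi Hj. apply pdC_scal; auto. Qed.
Lemma pdM_lincomb a a' F F' b b' G G' :
  pdC d U a a' -> pdM d n U F F' -> pdC d U b b' -> pdM d n U G G' ->
  pdM d n U (fun r v => mat_add (mat_cscale (a r v) (F r v)) (mat_cscale (b r v) (G r v)))
    (fun r v => mat_add (mat_add (mat_cscale (a' r v) (F r v)) (mat_cscale (a r v) (F' r v)))
                        (mat_add (mat_cscale (b' r v) (G r v)) (mat_cscale (b r v) (G' r v)))).
Proof. intros Ha HF Hb HG. apply pdM_add; apply pdM_cscale; assumption. Qed.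
Lemma pdM_mul F F' G G' : pdM d n U F F' -> pdM d n U G G' ->
  pdM d n U (fun r v => mat_mul n (F r v) (G r v))
    (fun r v => mat_add (mat_mul n (F' r v) (G r v)) (mat_mul n (F r v) (G' r v))).
Proof.
  intros HF HG i j Hi Hj. eapply pdC_val; [|apply pdC_sum; intros k Hk; apply pdC_mul; auto].
  intros r v _. unfold mat_add, mat_mul. rewrite <- Csum_add. reflexivity.
Qed.
End PartialDerivatives.

(** * Second derivatives *)

Lemma Derive_of_lim f x l : derivable_pt_lim f x l -> Derive.Derive f x = l.
Proof. intros H. apply Derive.is_derive_unique, Derive.is_derive_Reals, H. Qed.
Lemma ex_derive_of_lim f x l : derivable_pt_lim f x l ->
  @Derive.ex_derive Hierarchy.R_AbsRing Hierarchy.R_NormedModule f x.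
Proof. intros H. exists l. apply Derive.is_derive_Reals, H. Qed.


(* Schwarz's theorem, from Coquelicot's version stated with [Derive]. *)
Lemma pd_mixed_sym U f fr fv frv fvr : open_region U ->
  pd_rho U f fr -> pd_v U f fv -> pd_v U fr frv -> pd_rho U fv fvr ->
  cont_on U frv -> cont_on U fvr -> forall r v, U r v -> frv r v = fvr r v.
Proof.
  intros HU Hr Hv Hrv Hvr Crv Cvr r v Hin.
  destruct (HU r v Hin) as [e [He Hball]].
  set (e2 := e / 2). assert (He2 : 0 < e2) by (unfold e2; lra).
  assert (Hbox : forall u w z1 z2, Rabs (u - r) < e2 -> Rabs (w - v) < e2 ->
            Rabs (z1 - u) < e2 -> Rabs (z2 - w) < e2 -> U z1 w /\ U u z2).
  { intros u w z1 z2 Hu Hw H1 H2.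
    pose proof (Rabs_triang (z1 - u) (u - r)). pose proof (Rabs_triang (z2 - w) (w - v)).
    replace (z1 - u + (u - r)) with (z1 - r) in * by ring.
    replace (z2 - w + (w - v)) with (z2 - v) in * by ring.
    unfold e2 in *; split; apply Hball; lra. }
  assert (Hself : forall x, Rabs (x - x) < e2) by (intros; rewrite Rminus_diag, Rabs_R0; lra).
  assert (Dv_r : forall u w, Rabs (u - r) < e2 -> Rabs (w - v) < e2 ->
     derivable_pt_lim (fun z => Derive.Derive (fun t => f z t) w) u (fvr u w)).
  { intros u w Hu Hw. apply (derivable_pt_lim_loc _ (fun z => fv z w) _ _ e2 He2).
    - intros z Hz. apply Derive_of_lim, Hv. apply (Hbox u w z w); auto.
    - apply Hvr. apply (Hbox u w u w); auto. }
  assert (Dr_v : forall u w, Rabs (u - r) < e2 -> Rabs (w - v) < e2 ->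
     derivable_pt_lim (fun z => Derive.Derive (fun t => f t z) u) w (frv u w)).
  { intros u w Hu Hw. apply (derivable_pt_lim_loc _ (fun z => fr u z) _ _ e2 He2).
    - intros z Hz. apply Derive_of_lim, Hr. apply (Hbox u w u z); auto.
    - apply Hrv. apply (Hbox u w u w); auto. }
  pose proof (Derive_2d.Schwarz f r v) as S.
  rewrite (Derive_of_lim _ _ _ (Dv_r r v (Hself r) (Hself v))),
          (Derive_of_lim _ _ _ (Dr_v r v (Hself r) (Hself v))) in S.
  symmetry. apply S.
  - exists (mkposreal e2 He2). simpl. intros u w Hu Hw.
    destruct (Hbox u w u w Hu Hw (Hself u) (Hself w)) as [Huw _].
    repeat split; eapply ex_derive_of_lim; eauto.
  - intros eps. destruct (Cvr r v Hin eps (cond_pos eps)) as [e' [He' Hc]].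
    assert (Hm : 0 < Rmin e' e2) by (apply Rmin_pos; lra).
    exists (mkposreal _ Hm). simpl. intros u w Hu Hw.
    pose proof (Rmin_l e' e2). pose proof (Rmin_r e' e2).
    rewrite (Derive_of_lim _ _ _ (Dv_r u w ltac:(lra) ltac:(lra))),
            (Derive_of_lim _ _ _ (Dv_r r v (Hself r) (Hself v))).
    apply Hc; try lra. apply Hball; unfold e2 in *; lra.
  - intros eps. destruct (Crv r v Hin eps (cond_pos eps)) as [e' [He' Hc]].
    assert (Hm : 0 < Rmin e' e2) by (apply Rmin_pos; lra).
    exists (mkposreal _ Hm). simpl. intros u w Hu Hw.
    pose proof (Rmin_l e' e2). pose proof (Rmin_r e' e2).
    rewrite (Derive_of_lim _ _ _ (Dr_v u w ltac:(lra) ltac:(lra))),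
            (Derive_of_lim _ _ _ (Dr_v r v (Hself r) (Hself v))).
    apply Hc; try lra. apply Hball; unfold e2 in *; lra.
Qed.

Lemma CkR2_partials U f fr fv : open_region U -> CkR 2 U f -> pd_rho U f fr -> pd_v U f fv ->
  exists frr w fvv, pd_rho U fr frr /\ pd_v U fr w /\ pd_rho U fv w /\ pd_v U fv fvv.
Proof.
  intros HU [_ [gr [gv [Hgr [Hgv [Cgr Cgv]]]]]] Hfr Hfv.
  destruct Cgr as [_ [grr [grv [Hgrr [Hgrv [_ Cgrv]]]]]].
  destruct Cgv as [_ [gvr [gvv [Hgvr [Hgvv [Cgvr _]]]]]].
  assert (Er : forall r v, U r v -> fr r v = gr r v)
    by (intros r v Hin; exact (uniqueness_limite _ _ _ _ (Hfr r v Hin) (Hgr r v Hin))).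
  assert (Ev : forall r v, U r v -> fv r v = gv r v)
    by (intros r v Hin; exact (uniqueness_limite _ _ _ _ (Hfv r v Hin) (Hgv r v Hin))).
  exists grr, grv, gvv. split; [|split; [|split]].
  - exact (pdR_ext Drho U _ _ _ HU Er Hgrr).
  - exact (pdR_ext Dv U _ _ _ HU Er Hgrv).
  - apply (pdR_ext Drho U _ _ _ HU Ev). apply (pdR_val Drho U _ gvr); [|exact Hgvr].
    intros r v Hin. symmetry. exact (pd_mixed_sym U f gr gv grv gvr HU Hgr Hgv Hgrv Hgvr Cgrv Cgvr r v Hin).
  - exact (pdR_ext Dv U _ _ _ HU Ev Hgvv).
Qed.

Lemma CkC1_partials U f : CkC 1 U f ->
  exists fr fv, pdC Drho U f fr /\ pdC Dv U f fv.
Proof.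
  intros [[_ [ar [av [Har [Hav _]]]]] [_ [br [bv [Hbr [Hbv _]]]]]].
  exists (fun r v => (ar r v, br r v)), (fun r v => (av r v, bv r v)).
  split; split; assumption.
Qed.

Lemma CkC2_partials U f fr fv : open_region U -> CkC 2 U f -> pdC Drho U f fr -> pdC Dv U f fv ->
  exists frr w fvv, pdC Drho U fr frr /\ pdC Dv U fr w /\ pdC Drho U fv w /\ pdC Dv U fv fvv.
Proof.
  intros HU [Hre Him] [Hr1 Hr2] [Hv1 Hv2].
  destruct (CkR2_partials U _ _ _ HU Hre Hr1 Hv1) as [arr [aw [avv [H1 [H2 [H3 H4]]]]]].
  destruct (CkR2_partials U _ _ _ HU Him Hr2 Hv2) as [brr [bw [bvv [K1 [K2 [K3 K4]]]]]].
  exists (fun r v => (arr r v, brr r v)), (fun r v => (aw r v, bw r v)),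
         (fun r v => (avv r v, bvv r v)).
  repeat split; assumption.
Qed.

Lemma matrix_choice {T : Type} (t0 : T) n (P : nat -> nat -> T -> Prop) :
  (forall i j, (i < n)%nat -> (j < n)%nat -> exists x, P i j x) ->
  exists D : nat -> nat -> T, forall i j, (i < n)%nat -> (j < n)%nat -> P i j (D i j).
Proof.
  intros H.
  assert (H' : forall i j, exists x, (i < n)%nat -> (j < n)%nat -> P i j x).
  { intros i j. destruct (Compare_dec.lt_dec i n), (Compare_dec.lt_dec j n);
      try (exists t0; intros; contradiction).
    destruct (H i j) as [x Hx]; auto. exists x; auto. }
  exists (fun i j => proj1_sig (constructive_indefinite_description _ (H' i j))).
  intros i j Hi Hj. exact (proj2_sig (constructive_indefinite_description _ (H' i j)) Hi Hj).
Qed.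

Lemma CkM1_partials n U F : CkM n 1 U F ->
  exists Fr Fv, pdM Drho n U F Fr /\ pdM Dv n U F Fv.
Proof.
  intros HF.
  destruct (matrix_choice (fun _ _ => C0, fun _ _ => C0) n
    (fun i j (p : (R -> R -> Cx) * (R -> R -> Cx)) =>
       pdC Drho U (fun r v => F r v i j) (fst p) /\ pdC Dv U (fun r v => F r v i j) (snd p)))
    as [D HD].
  { intros i j Hi Hj. destruct (CkC1_partials U _ (HF i j Hi Hj)) as [fr [fv Hf]].
    exists (fr, fv). exact Hf. }
  exists (fun r v i j => fst (D i j) r v), (fun r v i j => snd (D i j) r v).
  split; intros i j Hi Hj; apply (HD i j Hi Hj).
Qed.

Lemma CkM2_partials n U F Fr Fv : open_region U -> CkM n 2 U F ->
  pdM Drho n U F Fr -> pdM Dv n U F Fv ->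
  exists Frr W Fvv, pdM Drho n U Fr Frr /\ pdM Dv n U Fr W /\
                    pdM Drho n U Fv W /\ pdM Dv n U Fv Fvv.
Proof.
  intros HU HF HFr HFv.
  destruct (matrix_choice (fun _ _ => C0, fun _ _ => C0, fun _ _ => C0) n
    (fun i j (p : (R -> R -> Cx) * (R -> R -> Cx) * (R -> R -> Cx)) =>
       let '(frr, w, fvv) := p in
       pdC Drho U (fun r v => Fr r v i j) frr /\ pdC Dv U (fun r v => Fr r v i j) w /\
       pdC Drho U (fun r v => Fv r v i j) w /\ pdC Dv U (fun r v => Fv r v i j) fvv))
    as [D HD].
  { intros i j Hi Hj.
    destruct (CkC2_partials U _ _ _ HU (HF i j Hi Hj) (HFr i j Hi Hj) (HFv i j Hi Hj))
      as [frr [w [fvv Hf]]].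
    exists (frr, w, fvv). exact Hf. }
  exists (fun r v i j => fst (fst (D i j)) r v), (fun r v i j => snd (fst (D i j)) r v),
         (fun r v i j => snd (D i j) r v).
  split; [|split; [|split]]; intros i j Hi Hj; specialize (HD i j Hi Hj); revert HD;
    destruct (D i j) as [[frr w] fvv]; simpl; tauto.
Qed.

(** * Zero curvature *)

Section ZeroCurvature.
Variables (n : nat) (U : region).
Hypothesis HU : open_region U.
Variables (G Ginv Gr Gv W Fr Fv Frv Fvr : R -> R -> Mat).
Hypotheses (HGinv : forall r v, U r v -> mat_inverse n (G r v) (Ginv r v))
  (HGr : pdM Drho n U G Gr) (HGv : pdM Dv n U G Gv)
  (HGrv : pdM Dv n U Gr W) (HGvr : pdM Drho n U Gv W)
  (HFrv : pdM Dv n U Fr Frv) (HFvr : pdM Drho n U Fv Fvr).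

Lemma zero_curvature_left :
  (forall r v, U r v -> mat_eq n (mat_mul n (G r v) (Fr r v)) (Gr r v)) ->
  (forall r v, U r v -> mat_eq n (mat_mul n (G r v) (Fv r v)) (Gv r v)) ->
  forall r v, U r v -> mat_eq n (mat_sub (Fvr r v) (Frv r v))
    (mat_sub (mat_mul n (Fv r v) (Fr r v)) (mat_mul n (Fr r v) (Fv r v))).
Proof.
  intros Er Ev r v Hin.
  pose proof (pdM_unique_on Drho U n _ _ _ _ HU Ev (pdM_mul Drho U n _ _ _ _ HGr HFvr) HGvr
    r v Hin) as Wr.
  pose proof (pdM_unique_on Dv U n _ _ _ _ HU Er (pdM_mul Dv U n _ _ _ _ HGv HFrv) HGrv
    r v Hin) as Wv.
  apply (mat_mul_cancel_l n _ _ _ _ (HGinv r v Hin)). intros i j Hi Hj.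
  specialize (Wr i j Hi Hj). specialize (Wv i j Hi Hj). unfold mat_add in Wr, Wv.
  rewrite !mat_mulBr, <- !mat_mulA, (mat_mul_eq_l _ _ _ _ _ _ (Er r v Hin) Hi),
    (mat_mul_eq_l _ _ _ _ _ _ (Ev r v Hin) Hi).
  revert Wr Wv. clear. intros. nsatz.
Qed.

Lemma zero_curvature_right :
  (forall r v, U r v -> mat_eq n (mat_mul n (Fr r v) (G r v)) (Gr r v)) ->
  (forall r v, U r v -> mat_eq n (mat_mul n (Fv r v) (G r v)) (Gv r v)) ->
  forall r v, U r v -> mat_eq n (mat_sub (Frv r v) (Fvr r v))
    (mat_sub (mat_mul n (Fv r v) (Fr r v)) (mat_mul n (Fr r v) (Fv r v))).
Proof.
  intros Er Ev r v Hin.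
  pose proof (pdM_unique_on Drho U n _ _ _ _ HU Ev (pdM_mul Drho U n _ _ _ _ HFvr HGr) HGvr
    r v Hin) as Wr.
  pose proof (pdM_unique_on Dv U n _ _ _ _ HU Er (pdM_mul Dv U n _ _ _ _ HFrv HGv) HGrv
    r v Hin) as Wv.
  apply (mat_mul_cancel_r n _ _ _ _ (HGinv r v Hin)). intros i j Hi Hj.
  specialize (Wr i j Hi Hj). specialize (Wv i j Hi Hj). unfold mat_add in Wr, Wv.
  rewrite !mat_mulBl, !mat_mulA, (mat_mul_eq_r _ _ _ _ _ _ (Er r v Hin) Hj),
    (mat_mul_eq_r _ _ _ _ _ _ (Ev r v Hin) Hj).
  revert Wr Wv. clear. intros. nsatz.
Qed.
End ZeroCurvature.

(** * The spectral parameter *)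

(* On [U] this equals [1 / phi] (lemma [phi_inv_algebra]); unlike [1 / phi], its
   differentiability is evident from that of [phi]. *)
Definition phi_inv (sigma : R) (omega f : Cx) (r v : R) : Cx :=
  Cadd (Cscal sigma f) (Cscal (2 / r) (Csub omega (RtoC v))).

Lemma phi_inv_algebra sigma pm omega y f r v :
  sigma * sigma = 1 -> pm * pm = 1 -> r <> 0 ->
  Csq y = Cadd (Csq (Csub omega (RtoC v))) (RtoC (sigma * r ^ 2)) ->
  f = Cscal (/ r) (Cadd (Cscal (- sigma) (Csub omega (RtoC v))) (Cscal pm y)) ->
  Cadd (Csq f) (RtoC sigma) <> C0 ->
  let Psi := phi_inv sigma omega f r v in
  let c := Csub omega (RtoC v) in
  Cmul Psi f = C1 /\
  Cmul (RtoC r) (Cmul Psi Psi) = Cadd (Cmul (Cadd c c) Psi) (RtoC (sigma * r)) /\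
  Cadd (Csub (Cmul (RtoC r) Psi) c) (Csub (Cmul (RtoC r) Psi) c) <> C0.
Proof.
  intros Hs Hp Hr Hy Hf Hnz Psi c. unfold Psi, phi_inv, Csq in *. fold c in Hy, Hf |- *.
  assert (Es : Cmul (RtoC sigma) (RtoC sigma) = C1) by (rewrite <- RtoC_mul, Hs; reflexivity).
  assert (Ep : Cmul (RtoC pm) (RtoC pm) = C1) by (rewrite <- RtoC_mul, Hp; reflexivity).
  assert (Er : Cmul (RtoC r) (RtoC (/ r)) = C1) by (rewrite <- RtoC_mul, Rinv_r; auto).
  assert (E2 : RtoC (2 / r) = Cmul (Cadd C1 C1) (RtoC (/ r)))
    by (apply Cx_eq; simpl; field; exact Hr).
  assert (Esr : RtoC (sigma * r ^ 2) = Cmul (RtoC sigma) (Cmul (RtoC r) (RtoC r)))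
    by (apply Cx_eq; simpl; ring).
  assert (Esr' : RtoC (sigma * r) = Cmul (RtoC sigma) (RtoC r)) by apply RtoC_mul.
  rewrite !Cscal_RtoC in *. rewrite Esr in Hy. rewrite Esr', E2. rewrite RtoC_opp in Hf.
  assert (Hsr : Cmul (RtoC sigma) (RtoC r) <> C0)
    by (rewrite <- RtoC_mul; apply RtoC_neq0; intros E; apply Rmult_integral in E; nra).
  subst f. clear Hs Hp Esr Esr' E2.
  split; [nsatz | split; [nsatz |]].
  intros HL. apply Hnz, (Cmul_reg_l _ _ Hsr). unfold Csq. nsatz.
Qed.

Section SpectralParameter.
Variables (U : region) (sigma : R) (omega : Cx) (phi : R -> R -> Cx).
Hypotheses (HU : open_region U) (Hr : forall r v, U r v -> r <> 0) (Hs : sigma * sigma = 1).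

Local Notation Psi := (fun r v => phi_inv sigma omega (phi r v) r v).
Local Notation c := (fun (_ : R) v => Csub omega (RtoC v)).

Lemma phi_inv_pdC d phi' : pdC d U phi phi' -> exists Psi', pdC d U Psi Psi'.
Proof.
  intros Hphi. eexists. unfold phi_inv, Csub.
  apply pdC_add; apply pdC_scal; [apply pdR_const | exact Hphi | apply pdR_inv_rho, Hr |].
  apply pdC_add; [apply pdC_const | apply pdC_opp, pdC_RtoC, pdR_v].
Qed.


Lemma phi_inv_pde phi_r phi_v : pdC Drho U phi phi_r -> pdC Dv U phi phi_v ->
  (forall r v, U r v -> Cmul (RtoC r) (Cmul (Psi r v) (Psi r v))
                        = Cadd (Cmul (Cadd (c r v) (c r v)) (Psi r v)) (RtoC (sigma * r))) ->
  (forall r v, U r v -> Cadd (Csub (Cmul (RtoC r) (Psi r v)) (c r v))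
                             (Csub (Cmul (RtoC r) (Psi r v)) (c r v)) <> C0) ->
  exists Psi_r Psi_v, pdC Drho U Psi Psi_r /\ pdC Dv U Psi Psi_v /\
    forall r v, U r v ->
      Cmul (RtoC r) (Psi_v r v)
        = Cmul (Copp (RtoC sigma)) (Cmul (Psi r v) (Cadd (Psi r v) (Cmul (RtoC r) (Psi_r r v)))) /\
      Cmul (RtoC r) (Psi_r r v) = Cmul (Psi r v) (Cadd C1 (Cmul (RtoC r) (Psi_v r v))).
Proof.
  intros Hphi_r Hphi_v HQ HL.
  destruct (phi_inv_pdC Drho phi_r Hphi_r) as [Psi_r HPr].
  destruct (phi_inv_pdC Dv phi_v Hphi_v) as [Psi_v HPv].
  set (q := fun r v => Csub (Cmul (RtoC r) (Cmul (Psi r v) (Psi r v)))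
                            (Cadd (Cmul (Cadd (c r v) (c r v)) (Psi r v)) (RtoC (sigma * r)))).
  assert (Hq : forall r v, U r v -> q r v = C0) by (intros r v Hin; unfold q; rewrite HQ; auto; ring).
  eassert (Dq : forall d Psi', pdC d U Psi Psi' -> pdC d U q _).
  { intros d Psi' HP. unfold q, Csub at 1.
    apply pdC_add; [apply pdC_mul; [apply pdC_RtoC, pdR_rho | apply pdC_mul; exact HP]|].
    apply pdC_opp, pdC_add;
      [apply pdC_mul; [|exact HP] | apply pdC_RtoC, pdR_mul; [apply pdR_const | apply pdR_rho]].
    unfold Csub. apply pdC_add; apply pdC_add;
      [apply pdC_const | apply pdC_opp, pdC_RtoC, pdR_v | apply pdC_const | apply pdC_opp, pdC_RtoC, pdR_v]. }
  exists Psi_r, Psi_v. split; [exact HPr | split; [exact HPv |]]. intros r v Hin.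
  pose proof (pdC_zero_on _ _ _ _ HU Hq (Dq Drho Psi_r HPr) r v Hin) as Er.
  pose proof (pdC_zero_on _ _ _ _ HU Hq (Dq Dv Psi_v HPv) r v Hin) as Ev.
  specialize (HQ r v Hin). specialize (HL r v Hin). cbv beta iota in *.
  replace (0 * r + sigma * 1) with sigma in Er by ring.
  replace (0 * r + sigma * 0) with 0 in Ev by ring.
  change (RtoC 0) with C0 in Er, Ev. rewrite RtoC_mul in HQ.
  assert (Es : Cmul (RtoC sigma) (RtoC sigma) = C1) by (rewrite <- RtoC_mul, Hs; reflexivity).
  split; apply Csub_eq0, (Cmul_reg_l _ _ HL); revert Er Ev HQ Es; clear; intros; nsatz.
Qed.

End SpectralParameter.

(** * The field equation *)

Section FieldEquation.
Variables (n : nat) (U : region) (sigma : R).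
Hypothesis HU : open_region U.
Variables (Psi Psi_r Psi_v : R -> R -> Cx).
Hypotheses (HPsi_r : pdC Drho U Psi Psi_r) (HPsi_v : pdC Dv U Psi Psi_v)
  (HPsi_neq0 : forall r v, U r v -> Psi r v <> C0)
  (HPsi_pde : forall r v, U r v ->
     Cmul (RtoC r) (Psi_v r v)
       = Cmul (Copp (RtoC sigma)) (Cmul (Psi r v) (Cadd (Psi r v) (Cmul (RtoC r) (Psi_r r v)))) /\
     Cmul (RtoC r) (Psi_r r v) = Cmul (Psi r v) (Cadd C1 (Cmul (RtoC r) (Psi_v r v)))).
Variables (X Xinv Xr Xv Xrr Xrv Xvv Xinv_r Xinv_v : R -> R -> Mat).
Hypotheses (HXinv : forall r v, U r v -> mat_inverse n (X r v) (Xinv r v))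
  (HXr : pdM Drho n U X Xr) (HXv : pdM Dv n U X Xv)
  (HXrr : pdM Drho n U Xr Xrr) (HXrv : pdM Dv n U Xr Xrv)
  (HXvr : pdM Drho n U Xv Xrv) (HXvv : pdM Dv n U Xv Xvv)
  (HXinv_r : pdM Drho n U Xinv Xinv_r) (HXinv_v : pdM Dv n U Xinv Xinv_v).
Variables (M Minv Mr Mv Mrv : R -> R -> Mat).
Hypotheses (HMinv : forall r v, U r v -> mat_inverse n (M r v) (Minv r v))
  (HMr : pdM Drho n U M Mr) (HMv : pdM Dv n U M Mv)
  (HMrv : pdM Dv n U Mr Mrv) (HMvr : pdM Drho n U Mv Mrv).
Hypotheses
  (HAr_X : forall r v, U r v ->
     mat_eq n (mat_mul n (mat_mul n (Minv r v) (Mr r v)) (X r v))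
              (mat_sub (mat_cscale (Psi r v) (Xv r v)) (Xr r v)))
  (HAv_X : forall r v, U r v ->
     mat_eq n (mat_mul n (mat_mul n (Minv r v) (Mv r v)) (X r v))
              (mat_sub (mat_cscale (Psi r v) (mat_rscale (- sigma) (Xr r v))) (Xv r v))).

Local Notation Br := (fun r v => mat_mul n (Xr r v) (Xinv r v)).
Local Notation Bv := (fun r v => mat_mul n (Xv r v) (Xinv r v)).
Local Notation Ar := (fun r v => mat_mul n (Minv r v) (Mr r v)).
Local Notation Av := (fun r v => mat_mul n (Minv r v) (Mv r v)).

Lemma B_partials_flat : exists Brr Brv Bvr Bvv,
  pdM Drho n U Br Brr /\ pdM Dv n U Br Brv /\ pdM Drho n U Bv Bvr /\ pdM Dv n U Bv Bvv /\
  forall r v, U r v -> mat_eq n (mat_sub (Brv r v) (Bvr r v))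
    (mat_sub (mat_mul n (Bv r v) (Br r v)) (mat_mul n (Br r v) (Bv r v))).
Proof.
  pose proof (pdM_mul Dv U n _ _ _ _ HXrv HXinv_v) as HBrv.
  pose proof (pdM_mul Drho U n _ _ _ _ HXvr HXinv_r) as HBvr.
  do 4 eexists. split; [exact (pdM_mul Drho U n _ _ _ _ HXrr HXinv_r)|].
  split; [exact HBrv | split; [exact HBvr | split; [exact (pdM_mul Dv U n _ _ _ _ HXvv HXinv_v)|]]].
  apply (zero_curvature_right n U HU X Xinv Xr Xv Xrv); try assumption;
    intros r v Hin; exact (mat_mulKV n _ _ _ (mat_inverse_sym n _ _ (HXinv r v Hin))).
Qed.

Lemma A_lincomb_B r v : U r v ->
  mat_eq n (Ar r v) (mat_add (mat_cscale (Copp C1) (Br r v)) (mat_cscale (Psi r v) (Bv r v))) /\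
  mat_eq n (Av r v)
    (mat_add (mat_cscale (Cmul (Copp (RtoC sigma)) (Psi r v)) (Br r v)) (mat_cscale (Copp C1) (Bv r v))).
Proof.
  intros Hin.
  assert (HB : forall Y i j, (i < n)%nat -> (j < n)%nat ->
            mat_mul n (mat_mul n (Y r v) (Xinv r v)) (X r v) i j = Y r v i j)
    by (intros Y i j Hi Hj; exact (mat_mulKV n _ _ _ (mat_inverse_sym n _ _ (HXinv r v Hin)) i j Hi Hj)).
  split; apply (mat_mul_cancel_r n _ _ _ _ (HXinv r v Hin)); intros i j Hi Hj;
    [rewrite HAr_X by assumption | rewrite HAv_X by assumption];
    rewrite mat_mulDl, !mat_mulZl, !HB by assumption;
    unfold mat_sub, mat_cscale, mat_rscale; rewrite ?Cscal_RtoC, ?RtoC_opp; ring.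
Qed.

Theorem field_equation : exists P Q : R -> R -> Mat,
  pdM_rho n U (fun r v => mat_rscale (- sigma * r) (Ar r v)) P /\
  pdM_v n U (fun r v => mat_rscale r (Av r v)) Q /\
  forall r v, U r v -> mat_eq n (mat_sub (P r v) (Q r v)) mat_zero.
Proof.
  destruct B_partials_flat as [Brr [Brv [Bvr [Bvv [HBrr [HBrv [HBvr [HBvv HBflat]]]]]]]].
  pose proof (pdM_ext Drho U n _ _ _ HU (fun r v Hin => proj1 (A_lincomb_B r v Hin))
    (pdM_lincomb _ _ n _ _ _ _ _ _ _ _ (pdC_const _ _ _) HBrr HPsi_r HBvr)) as HArr.
  pose proof (pdM_ext Dv U n _ _ _ HU (fun r v Hin => proj1 (A_lincomb_B r v Hin))
    (pdM_lincomb _ _ n _ _ _ _ _ _ _ _ (pdC_const _ _ _) HBrv HPsi_v HBvv)) as HArv.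
  pose proof (pdM_ext Drho U n _ _ _ HU (fun r v Hin => proj2 (A_lincomb_B r v Hin))
    (pdM_lincomb _ _ n _ _ _ _ _ _ _ _ (pdC_mul _ _ _ _ _ _ (pdC_const _ _ _) HPsi_r) HBrr
       (pdC_const _ _ _) HBvr)) as HAvr.
  pose proof (pdM_ext Dv U n _ _ _ HU (fun r v Hin => proj2 (A_lincomb_B r v Hin))
    (pdM_lincomb _ _ n _ _ _ _ _ _ _ _ (pdC_mul _ _ _ _ _ _ (pdC_const _ _ _) HPsi_v) HBrv
       (pdC_const _ _ _) HBvv)) as HAvv.
  pose proof (zero_curvature_left n U HU M Minv Mr Mv Mrv Ar Av _ _ HMinv HMr HMv HMrv HMvr
    HArv HAvr (fun r v Hin => mat_mulVK n _ _ _ (HMinv r v Hin))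
    (fun r v Hin => mat_mulVK n _ _ _ (HMinv r v Hin))) as HAflat.
  eexists; eexists; split;
    [exact (pdM_rscale Drho U n _ _ _ _ (pdR_mul _ _ _ _ _ _ (pdR_const _ _ _) (pdR_rho _ _)) HArr)|].
  split; [exact (pdM_rscale Dv U n _ _ _ _ (pdR_rho _ _) HAvv)|].
  intros r v Hin i j Hi Hj.
  destruct (A_lincomb_B r v Hin) as [ErA EvA].
  pose proof (HBflat r v Hin i j Hi Hj) as EB. pose proof (HAflat r v Hin i j Hi Hj) as EA.
  destruct (HPsi_pde r v Hin) as [Ev Er]. pose proof (HPsi_neq0 r v Hin) as HPsi.
  cbv beta in *. rewrite (mat_commutator_eq n _ _ _ _ i j EvA ErA Hi Hj), mat_commutator_lincomb in EA.
  specialize (ErA i j Hi Hj).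
  replace (0 * r + - sigma * 1) with (- sigma) by ring.
  unfold mat_sub, mat_add, mat_rscale, mat_cscale, mat_zero in *.
  rewrite ErA, !Cscal_RtoC, RtoC_mul, RtoC_opp. change (RtoC 0) with C0.
  (* the commutator terms of [EA] and [EB] cancel, the rest vanishes by [Ev] and [Er] *)
  apply (Cmul_reg_l _ _ HPsi). revert EA EB Ev Er. clear. intros. nsatz.
Qed.
End FieldEquation.

Theorem mainTheorem7
  (sigma : R) (Hsigma : sigma = 1 \/ sigma = -1)
  (U : region) (HUopen : open_region U) (HUhalf : in_weyl_half_plane U)
  (phi : R -> R -> Cx) (Hphi_smooth : SmoothC U phi)
  (omega : Cx) (sq : R -> R -> Cx) (pm : R) (Hpm : pm = 1 \/ pm = -1)
  (Hsq_cont : CkC 0 U sq)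
  (Hsq : forall r v, U r v ->
     Csq (sq r v) = Cadd (Csq (Csub omega (RtoC v))) (RtoC (sigma * r ^ 2)))
  (Hphi_form : forall r v, U r v ->
     phi r v = Cscal (/ r) (Cadd (Cscal (- sigma) (Csub omega (RtoC v)))
                                 (Cscal pm (sq r v))))
  (Hphi_nz : forall r v, U r v -> phi r v <> C0)
  (Hphi_nz2 : forall r v, U r v -> Cadd (Csq (phi r v)) (RtoC sigma) <> C0)
  (n : nat)
  (M Minv Mr Mv : R -> R -> Mat)
  (HM : CkM n 2 U M)
  (HMinv : forall r v, U r v -> mat_inverse n (M r v) (Minv r v))
  (HMr : pdM_rho n U M Mr) (HMv : pdM_v n U M Mv)
  (X Xinv Xr Xv : R -> R -> Mat)
  (HX : CkM n 2 U X)
  (HXinv_inv : forall r v, U r v -> mat_inverse n (X r v) (Xinv r v))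
  (HXinv : CkM n 1 U Xinv)
  (HXr : pdM_rho n U X Xr) (HXv : pdM_v n U X Xv)
  (HBM_rho : forall r v, U r v ->
     mat_eq n
       (mat_cscale (phi r v)
          (mat_add (Xr r v) (mat_mul n (mat_mul n (Minv r v) (Mr r v)) (X r v))))
       (Xv r v))
  (HBM_v : forall r v, U r v ->
     mat_eq n
       (mat_cscale (phi r v)
          (mat_add (Xv r v) (mat_mul n (mat_mul n (Minv r v) (Mv r v)) (X r v))))
       (mat_rscale (- sigma) (Xr r v))) :
  exists P Q : R -> R -> Mat,
    pdM_rho n U (fun r v => mat_rscale (- sigma * r) (mat_mul n (Minv r v) (Mr r v))) P /\
    pdM_v n U (fun r v => mat_rscale r (mat_mul n (Minv r v) (Mv r v))) Q /\
    (forall r v, U r v -> mat_eq n (mat_sub (P r v) (Q r v)) mat_zero).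
Proof.
  assert (Hs : sigma * sigma = 1) by (destruct Hsigma; subst; ring).
  assert (Hp : pm * pm = 1) by (destruct Hpm; subst; ring).
  assert (Hr : forall r v, U r v -> r <> 0) by (intros r v Hin; specialize (HUhalf r v Hin); lra).
  pose proof (fun r v Hin => phi_inv_algebra sigma pm omega (sq r v) (phi r v) r v
                Hs Hp (Hr r v Hin) (Hsq r v Hin) (Hphi_form r v Hin) (Hphi_nz2 r v Hin)) as HPsi.
  destruct (CkC1_partials U phi (Hphi_smooth 1%nat)) as [phi_r [phi_v [Hphi_r Hphi_v]]].
  destruct (phi_inv_pde U sigma omega phi HUopen Hr Hs phi_r phi_v Hphi_r Hphi_v)
    as [Psi_r [Psi_v [HPsi_r [HPsi_v HPsi_pde]]]].
  1, 2: intros r v Hin; apply (HPsi r v Hin).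
  destruct (CkM1_partials n U Xinv HXinv) as [Xinv_r [Xinv_v [HXinv_r HXinv_v]]].
  destruct (CkM2_partials n U X Xr Xv HUopen HX HXr HXv)
    as [Xrr [Xrv [Xvv [HXrr [HXrv [HXvr HXvv]]]]]].
  destruct (CkM2_partials n U M Mr Mv HUopen HM HMr HMv) as [_ [Mrv [_ [_ [HMrv [HMvr _]]]]]].
  apply (field_equation n U sigma HUopen
           (fun r v => phi_inv sigma omega (phi r v) r v) Psi_r Psi_v HPsi_r HPsi_v)
    with (X := X) (Xr := Xr) (Xv := Xv) (Xinv := Xinv) (Xrr := Xrr) (Xrv := Xrv) (Xvv := Xvv) (Xinv_r := Xinv_r)
         (Xinv_v := Xinv_v) (M := M) (Mrv := Mrv); try assumption.
  - intros r v Hin. exact (Cmul_eq1_neq0 _ _ (proj1 (HPsi r v Hin))).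
  - intros r v Hin. exact (mat_solve_linear n _ _ _ _ _ (proj1 (HPsi r v Hin)) (HBM_rho r v Hin)).
  - intros r v Hin. exact (mat_solve_linear n _ _ _ _ _ (proj1 (HPsi r v Hin)) (HBM_v r v Hin)).
Qed.
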